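(* For any set $\mathscr X$ disjoint from $\tau$, the $\bar\tau$-algebra $\mathcal N_{\bar\tau}(\mathscr X)$ is an infinitary clone $\tau$-algebra, and it is the free infinitary clone $\tau$-algebra over the set $\dot{\mathscr X}=\{\dot x: x\in\mathscr X\}$ of generators: for every infinitary clone $\tau$-algebra $\mathcal C$ and every function $\alpha:\dot{\mathscr X}\to C$ there is a unique homomorphism $\mathcal N_{\bar\tau}(\mathscr X)\to\mathcal C$ extending $\alpha$. In particular, $\mathcal N_{\bar\tau}=\mathcal N_{\bar\tau}(\emptyset)$ is initial among infinitary clone $\tau$-algebras.
   Context: $\tau$ is a set of $\omega$-ary operation symbols disjoint from $\{q\}\cup\{e_i:i\in\omega\}$. $\bar\tau$ is the type with nullary $e_i$ ($i\in\omega$), nullary $f$ for each $f\in\tau$, and $\omega$-ary $q$. An infinitary clone $\tau$-algebra is a $\bar\tau$-algebra satisfying (N1) $q(e_i,x_0,x_1,\dots)=x_i$; (N2) $q(x,e_0,e_1,\dots)=x$; (N3) $q(q(x,y_0,y_1,\dots),\boldsymbol z)=q(x,q(y_0,\boldsymbol z),q(y_1,\boldsymbol z),\dots)$. Metaterms: $N_{\bar\tau}(\mathscr X)$ is the smallest set containing the symbols $e_0,e_1,\dots$ and containing $w(t_0,t_1,\dots)$ whenever $w\in\tau\cup\mathscr X$ and $t_0,t_1,\dots\in N_{\bar\tau}(\mathscr X)$ (well-founded countably branching terms, every symbol of $\tau\cup\mathscr X$ being treated as $\omega$-ary). $\mathcal N_{\bar\tau}(\mathscr X)$ is the $\bar\tau$-algebra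 on $N_{\bar\tau}(\mathscr X)$ with $e_i\mapsto e_i$, $f\mapsto f(e_0,e_1,\dots)$ for $f\in\tau$, and $q$ defined by recursion on the first argument: $q(e_i,t_0,t_1,\dots)=t_i$ and $q(w(t_0,t_1,\dots),\boldsymbol u)=w(q(t_0,\boldsymbol u),q(t_1,\boldsymbol u),\dots)$ for $w\in\tau\cup\mathscr X$. For $x\in\mathscr X$, $\dot x=x(e_0,e_1,\dots)$. *)

Set Implicit Arguments.

Record bar_alg (tau : Type) : Type := BarAlg {
  carrier :> Type;
  ae : nat -> carrier;
  af : tau -> carrier;
  aq : carrier -> (nat -> carrier) -> carrier
}.
Arguments ae {tau} _ _.
Arguments af {tau} _ _.
Arguments aq {tau} _ _ _.

(* Infinitary clone tau-algebra: axioms (N1)-(N3). *)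
Definition is_clone_alg (tau : Type) (A : bar_alg tau) : Prop :=
  (forall (i : nat) (xs : nat -> A), aq A (ae A i) xs = xs i) /\
  (forall x : A, aq A x (ae A) = x) /\
  (forall (x : A) (ys zs : nat -> A),
      aq A (aq A x ys) zs = aq A x (fun i => aq A (ys i) zs)).

Definition is_hom {tau : Type} {A B : bar_alg tau} (h : A -> B) : Prop :=
  (forall i, h (ae A i) = ae B i) /\
  (forall f, h (af A f) = af B f) /\
  (forall (x : A) (ys : nat -> A), h (aq A x ys) = aq B (h x) (fun i => h (ys i))).

(* Leaves are the symbols e_i; internal nodes are labelled by a symbol of
   tau \cup X (represented as the disjoint sum tau + X) and are omega-ary. *)
Inductive metaterm (tau X : Type) : Type :=
| MVar : nat -> metaterm tau X
| MNode : (tau + X) -> (nat -> metaterm tau X) -> metaterm tau X.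
Arguments MVar {tau X} i.
Arguments MNode {tau X} w ts.

Fixpoint mq (tau X : Type) (t : metaterm tau X) (u : nat -> metaterm tau X)
  : metaterm tau X :=
  match t with
  | MVar i => u i
  | MNode w ts => MNode w (fun n => mq (ts n) u)
  end.

Definition N_alg (tau X : Type) : bar_alg tau :=
  @BarAlg tau (metaterm tau X) (fun i => MVar i)
    (fun f => MNode (inl f) (fun i => MVar i)) (@mq tau X).

Definition mdot (tau X : Type) (x : X) : metaterm tau X :=
  MNode (inr x) (fun i => MVar i).

Definition dotX (tau X : Type) : Type :=
  { t : metaterm tau X | exists x : X, t = mdot tau x }.

(* The metaterm q substitutes the arguments for the variables e_i, so (N1) holds by
   definition and (N2), (N3) are the usual identity and associativity laws of
   substitution, proved by induction on the term.  Every node w(t_0, t_1, ...) is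
   q(w(e_0, e_1, ...), t_0, t_1, ...), and w(e_0, e_1, ...) is a constant f or a
   generator x-dot; hence a homomorphism is determined by its values on generators,
   and conversely interpreting each node this way defines one. *)
From Stdlib Require Import FunctionalExtensionality.

Set Implicit Arguments.

Lemma mq_MVar_r (tau X : Type) (t : metaterm tau X) : mq t MVar = t.
Proof.
  induction t as [i | w ts IH]; simpl; [reflexivity |].
  f_equal; apply functional_extensionality; exact IH.
Qed.

Lemma mq_assoc (tau X : Type) (t : metaterm tau X) (ys zs : nat -> metaterm tau X) :
  mq (mq t ys) zs = mq t (fun i => mq (ys i) zs).
Proof.
  induction t as [i | w ts IH]; simpl; [reflexivity |].
  f_equal; apply functional_extensionality; exact IH.
Qed.

Lemma N_alg_clone (tau X : Type) : is_clone_alg (N_alg tau X).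
Proof.
  split; [| split].
  - reflexivity.
  - exact (@mq_MVar_r tau X).
  - exact (@mq_assoc tau X).
Qed.

Section Extension.

Variables (tau X : Type) (C : bar_alg tau) (a : X -> C).

Definition symbol_value (w : tau + X) : C :=
  match w with
  | inl f => af C f
  | inr x => a x
  end.

Fixpoint extend (t : metaterm tau X) : C :=
  match t with
  | MVar i => ae C i
  | MNode w ts => aq C (symbol_value w) (fun n => extend (ts n))
  end.

Hypothesis HC : is_clone_alg C.

Lemma extend_MNode_MVar (w : tau + X) : extend (MNode w MVar) = symbol_value w.
Proof. destruct HC as [_ [N2 _]]; exact (N2 _). Qed.

Lemma extend_mq (t : metaterm tau X) (u : nat -> metaterm tau X) :
  extend (mq t u) = aq C (extend t) (fun n => extend (u n)).
Proof.
  destruct HC as [N1 [_ N3]].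
  induction t as [i | w ts IH]; simpl.
  - now rewrite N1.
  - rewrite N3; f_equal; apply functional_extensionality; exact IH.
Qed.

Lemma extend_is_hom : is_hom (extend : N_alg tau X -> C).
Proof.
  split; [| split].
  - reflexivity.
  - intro f; exact (extend_MNode_MVar (inl f)).
  - exact extend_mq.
Qed.

Lemma extend_mdot (x : X) : extend (mdot tau x) = a x.
Proof. exact (extend_MNode_MVar (inr x)). Qed.

End Extension.

Lemma hom_eq_extend (tau X : Type) (C : bar_alg tau) (h : N_alg tau X -> C) :
  is_hom h -> forall t, h t = extend C (fun x => h (mdot tau x)) t.
Proof.
  intros [h_e [h_f h_q]] t.
  induction t as [i | w ts IH]; [exact (h_e i) |].
  change (MNode w ts) with (aq (N_alg tau X) (MNode w MVar) ts).
  rewrite h_q; simpl; f_equal.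
  - destruct w as [f | x]; [exact (h_f f) | reflexivity].
  - apply functional_extensionality; exact IH.
Qed.

Definition dot_generator (tau X : Type) (x : X) : dotX tau X :=
  exist _ (mdot tau x) (ex_intro _ x eq_refl).

Lemma N_alg_free (tau X : Type) (C : bar_alg tau) : is_clone_alg C ->
  forall alpha : dotX tau X -> C,
    exists h : N_alg tau X -> C,
      is_hom h /\
      (forall g : dotX tau X, h (proj1_sig g) = alpha g) /\
      (forall h' : N_alg tau X -> C,
         is_hom h' -> (forall g : dotX tau X, h' (proj1_sig g) = alpha g) ->
         forall t, h' t = h t).
Proof.
  intros HC alpha.
  set (a := fun x => alpha (dot_generator tau x)).
  exists (extend C a); split; [| split].
  - exact (extend_is_hom a HC).
  - intros [t [x ->]]; exact (extend_mdot a HC x).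
  - intros h' h'_hom h'_gen t.
    rewrite (hom_eq_extend h'_hom); f_equal.
    apply functional_extensionality; intro x; exact (h'_gen (dot_generator tau x)).
Qed.

Theorem proposition4p3 :
  forall (tau X : Type),
    is_clone_alg (N_alg tau X) /\
    (forall (C : bar_alg tau), is_clone_alg C ->
       forall alpha : dotX tau X -> C,
         exists h : N_alg tau X -> C,
           is_hom h /\
           (forall g : dotX tau X, h (proj1_sig g) = alpha g) /\
           (forall h' : N_alg tau X -> C,
              is_hom h' -> (forall g : dotX tau X, h' (proj1_sig g) = alpha g) ->
              forall t, h' t = h t)) /\
    (forall (C : bar_alg tau), is_clone_alg C ->
       exists h : N_alg tau Empty_set -> C,
         is_hom h /\
         (forall h' : N_alg tau Empty_set -> C, is_hom h' -> forall t, h' t = h t)).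
Proof.
  intros tau X; split; [exact (N_alg_clone tau X) |].
  split; [exact (@N_alg_free tau X) |].
  intros C HC.
  (* Over the empty set there are no generators, so any [alpha] will do. *)
  destruct (N_alg_free HC (fun _ : dotX tau Empty_set => ae C 0))
    as [h [h_hom [_ h_unique]]].
  exists h; split; [exact h_hom |].
  intros h' h'_hom; apply h_unique; [exact h'_hom |].
  intros [_ [[] _]].
Qed.
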